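(* For every item sequence $I\in(0,1]^n$, $MM_2(I)=OPT_2(I)$.
   Context: The $k$-cardinality constrained bin packing problem: an item sequence $I=(a_1,\dots,a_n)\in(0,1]^n$ must be packed into bins of capacity $1$ so that each bin contains at most $k$ items; $OPT_k(I)$ is the minimum possible number of non-empty bins, and $ALG(I)$ is the number of non-empty bins used by algorithm $ALG$. Algorithm $MM_k$: sort the items in non-increasing order; keep a single open bin with load $S$. Repeat while items remain: if the open bin already contains $k$ items, close it and open a new bin; else if the head (largest remaining) item fits ($S+\text{head}\le1$) pack it; else if the tail (smallest remaining) item fits pack it; else close the open bin permanently and open a new empty bin. $MM_2$ is the case $k=2$. *)

From HB Require Import structures.
From mathcomp Require Import all_boot all_order all_algebra.
Set Implicit Arguments. Unset Strict Implicit. Unset Printing Implicit Defensive.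
Import Order.TTheory GRing.Theory Num.Theory.
Local Open Scope ring_scope.

Section BinPacking.
Variable R : realFieldType.

(* One run of the main loop of MM_k, with fuel.
   [s]   : remaining items, sorted non-increasingly (head = largest, last = smallest)
   [cnt] : number of items in the open bin,  [S] : load of the open bin.
   Returns the number of non-empty bins used from now on (including the open one). *)
Fixpoint mm_loop (k : nat) (fuel : nat) (s : seq R) (cnt : nat) (S : R) : nat :=
  match fuel with
  | 0 => 0
  | fuel'.+1 =>
    match s with
    | [::] => (0 < cnt)%N
    | h :: _ =>
      if cnt == k then ((0 < cnt)%N + mm_loop k fuel' s 0 0)%N
      else if S + h <= 1 then mm_loop k fuel' (behead s) cnt.+1 (S + h)
      else let t := last h s in
        if S + t <= 1 then mm_loop k fuel' (take (size s).-1 s) cnt.+1 (S + t)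
        else ((0 < cnt)%N + mm_loop k fuel' s 0 0)%N
    end
  end.

(* MM_k(I): sort non-increasingly, then run the loop.  Each iteration either
   packs an item or closes a non-empty bin, so 2n+2 iterations suffice. *)
Definition MM (k : nat) (I : seq R) : nat :=
  mm_loop k (2 * size I).+2 (sort (fun x y : R => y <= x) I) 0 0.

(* A packing of the items of I assigns to each item (index i < n) a bin label
   in 'I_n (n bins always suffice).  It is k-feasible if every bin has at most
   k items and total size at most 1. *)
Definition feasible (k : nat) (I : seq R)
    (f : {ffun 'I_(size I) -> 'I_(size I)}) : bool :=
  [forall b : 'I_(size I),
     (#|[set i | f i == b]| <= k)%N && (\sum_(i | f i == b) I`_i <= 1)].

Definition nbins (n : nat) (f : {ffun 'I_n -> 'I_n}) : nat := #|f @: setT|.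

Definition OPT (k : nat) (I : seq R) : nat :=
  \big[minn/size I]_(f : {ffun 'I_(size I) -> 'I_(size I)} | @feasible k I f) nbins f.

End BinPacking.
Arguments feasible {R} k I f.
Arguments OPT {R} k I.
Arguments MM {R} k I.

(* MM_2 opens every bin with the largest remaining item a. If not even the
   smallest remaining item fits beside a, then a sits alone in every packing,
   and removing it saves a bin. Otherwise MM_2 closes a bin holding a and one
   more item c. In any packing the bins of a and c hold at most one further
   item each: the one beside a has size at most 1 - a, the one beside c has
   size at most a because a is largest. Merging these two leftovers gives a
   packing of the remaining items with one bin fewer, so induction yields
   MM_2 <= OPT_2; conversely the bins of MM_2 form a feasible packing. *)

From HB Require Import structures.
From mathcomp Require Import all_boot all_order all_algebra zify lra.
Import Order.TTheory GRing.Theory Num.Theory.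
Local Open Scope ring_scope.
Set Implicit Arguments. Unset Strict Implicit. Unset Printing Implicit Defensive.

Section FirstBin.
Variable R : realFieldType.

Lemma mm_loop_nil k fuel : @mm_loop R k fuel [::] 0 0 = 0%N.
Proof. by case: fuel. Qed.

Lemma mm2_loop_full_bin fuel (s : seq R) S :
  mm_loop 2 fuel.+1 s 2 S = (mm_loop 2 fuel s 0 0).+1.
Proof. by case: s => [|x s] //=; rewrite mm_loop_nil. Qed.

Lemma mm2_loop_empty_bin fuel (h : R) s : h <= 1 ->
  mm_loop 2 fuel.+1 (h :: s) 0 0 = mm_loop 2 fuel s 1 h.
Proof. by move=> h1; rewrite /= add0r h1. Qed.

Lemma mm2_loop_one_item fuel (h : R) s S : mm_loop 2 fuel.+1 (h :: s) 1 S =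
  if S + h <= 1 then mm_loop 2 fuel s 2 (S + h)
  else if S + last h s <= 1 then mm_loop 2 fuel (belast h s) 2 (S + last h s)
  else (mm_loop 2 fuel (h :: s) 0 0).+1.
Proof. by rewrite /= lastI -cats1 take_size_cat ?size_belast. Qed.

Variables (T : eqType) (w : T -> R).

(* Whether [c] was the largest or the smallest remaining item is forgotten:
   only the contents of the bin matter below. *)
Variant first_bin (a : T) (t r : seq T) : Prop :=
  | FirstBinPair c of subseq r t & perm_eq t (c :: r) & w a + w c <= 1
  | FirstBinSingle of r = t & (t = [::] \/ 1 < w a + w (last a t)).

Lemma first_bin_subseq a t r : first_bin a t r -> subseq r t.
Proof. by case=> [c|-> _]. Qed.

Lemma mm2_loop_first_bin fuel a t : ((2 * size t).+3 <= fuel)%N -> w a <= 1 ->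
  exists r fuel', [/\ ((2 * size r).+1 <= fuel')%N, first_bin a t r &
    mm_loop 2 fuel (map w (a :: t)) 0 0 = (mm_loop 2 fuel' (map w r) 0 0).+1].
Proof.
move=> fuel_t wa1; case: fuel fuel_t => [|[|[|fuel]]] // fuel_t.
rewrite map_cons mm2_loop_empty_bin //.
case: t fuel_t => [|c t] fuel_t.
  by exists [::], 1%N; split=> //; apply: FirstBinSingle => //; left.
rewrite map_cons mm2_loop_one_item -map_cons last_map belast_map.
have fuel_ct : ((2 * size t).+1 <= fuel)%N by move: fuel_t => /=; lia.
case: ifP => [ac | _]; last case: ifP => [a_last | a_last].
- exists t, fuel; split; rewrite ?mm2_loop_full_bin //.
  by apply: (@FirstBinPair _ _ _ c); rewrite ?subseq_cons.
- exists (belast c t), fuel; split; rewrite ?mm2_loop_full_bin ?size_belast //.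
  apply: (@FirstBinPair _ _ _ (last c t)) => //.
  + by rewrite lastI subseq_rcons.
  + by rewrite lastI -cats1 perm_catC.
- exists (c :: t), fuel.+1; split => //.
  by apply: FirstBinSingle => //; right; rewrite ltNge a_last.
Qed.
End FirstBin.

Lemma subset_ltn_card (B : finType) (u v : seq B) x :
  {subset u <= v} -> x \in v -> x \notin u -> (#|u| < #|v|)%N.
Proof. by move=> uv xv xu; apply/proper_card/properP; split; [apply/subsetP|exists x]. Qed.

Section Packing.
Variables (R : realFieldType) (T : eqType) (w : T -> R).
Hypotheses (w_ge0 : forall i, 0 <= w i) (w_le1 : forall i, w i <= 1).

Definition fits (s : seq T) := (size s <= 2)%N /\ \sum_(i <- s) w i <= 1.

Definition bin (B : eqType) (f : T -> B) (t : seq T) (b : B) := [seq i <- t | f i == b].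

Definition packs (B : eqType) (f : T -> B) (t : seq T) := forall b, fits (bin f t b).

Lemma fits_perm s s' : perm_eq s s' -> fits s -> fits s'.
Proof. by move=> ss' [size_s sum_s]; rewrite /fits -(perm_size ss') -(perm_big _ ss'). Qed.

Lemma fits_subseq s s' : subseq s s' -> fits s' -> fits s.
Proof.
move=> ss' [size_s' sum_s']; split; first exact: leq_trans (size_subseq ss') _.
have [s'' s's] := perm_to_subseq ss'.
apply: le_trans sum_s'; rewrite (perm_big _ s's) big_cat lerDl.
exact: sumr_ge0.
Qed.

Lemma fits_small s : (size s <= 1)%N -> fits s.
Proof.
by case: s => [|x [|]] // _; rewrite /fits ?big_nil ?big_seq1 ?ler01 ?w_le1.
Qed.

Lemma packs_singletons t : uniq t -> packs id t.
Proof.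
by move=> t_uniq b; apply: fits_small; rewrite size_filter count_uniq_mem ?leq_b1.
Qed.

Lemma packs_perm (B : eqType) (f : T -> B) t t' : perm_eq t t' -> packs f t -> packs f t'.
Proof. by move=> tt' ft b; apply: fits_perm (ft b); apply: perm_filter. Qed.

Lemma packs_cons (B : eqType) (f : T -> B) x t : packs f (x :: t) -> packs f t.
Proof.
move=> ft b; apply: fits_subseq (ft b).
by rewrite /bin /=; case: ifP => _; rewrite ?subseq_cons.
Qed.

Lemma packs_drop_single (B : finType) (f : T -> B) a t :
  packs f (a :: t) -> {in t, forall y, 1 < w a + w y} ->
  packs f t /\ (#|map f t| < #|map f (a :: t)|)%N.
Proof.
move=> ft a_alone; split; first exact: packs_cons ft.
apply: (@subset_ltn_card _ _ _ (f a)); rewrite ?mem_head //.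
  by move=> _ /mapP [y yt ->]; rewrite map_f // mem_behead.
apply/mapP => -[y yt fya].
have : fits [:: a; y].
  apply: fits_subseq (ft (f a)).
  by rewrite /bin /= eqxx /= eqxx sub1seq mem_filter -fya eqxx.
rewrite /fits big_cons big_seq1 => -[_]; have := a_alone y yt; lra.
Qed.

Lemma fits_filterU (P Q : pred T) s :
  (size (filter P s) + size (filter Q s) <= 2)%N ->
  \sum_(i <- filter P s) w i + \sum_(i <- filter Q s) w i <= 1 ->
  fits [seq i <- s | P i || Q i].
Proof.
rewrite !size_filter -count_predUI !big_filter => size_PQ sum_PQ; split.
  by rewrite size_filter; apply: leq_trans size_PQ; apply: leq_addr.
apply: le_trans sum_PQ; rewrite big_filter; elim: s {size_PQ} => [|x s IH].
  by rewrite !big_nil addr0.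
by rewrite !big_cons; have := w_ge0 x; case: (P x); case: (Q x) => /=; lra.
Qed.

Lemma packs_drop_shared_bin (B : finType) (f : T -> B) a c r :
  f c = f a -> packs f [:: a, c & r] -> (#|map f r| < #|map f [:: a, c & r]|)%N.
Proof.
move=> fca fp; apply: (@subset_ltn_card _ _ _ (f a)); rewrite ?mem_head //.
  by move=> _ /mapP [i ir ->]; rewrite !inE map_f ?orbT.
apply/mapP => -[i ir fai]; have [size_a _] := fp (f a).
have ira : i \in bin f r (f a) by rewrite mem_filter -fai eqxx.
move: size_a; rewrite /bin /= eqxx fca eqxx -/(bin f r (f a)).
by case: (bin f r (f a)) ira.
Qed.

Lemma packs_merge_bins (B : finType) (f : T -> B) a c r :
  f c != f a -> packs f [:: a, c & r] -> {in r, forall y, w y <= w a} ->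
  exists2 g : T -> B, packs g r & (#|map g r| < #|map f [:: a, c & r]|)%N.
Proof.
move=> fca fp a_max; have fr := packs_cons (packs_cons fp).
have [size_a sum_a] := fp (f a); have [size_c _] := fp (f c).
move: size_a sum_a size_c; rewrite /bin /= !eqxx [f a == _]eq_sym (negbTE fca) big_cons.
rewrite -!/(bin f r _) => size_a sum_a size_c.
have sum_rc : \sum_(i <- bin f r (f c)) w i <= w a.
  have : {in bin f r (f c), forall y, w y <= w a}.
    by move=> y; rewrite mem_filter => /andP [_ /a_max].
  case: (bin f r (f c)) size_c => [|y [|]] //= _; rewrite ?big_nil ?big_seq1 //.
  by move/(_ y (mem_head _ _)).
pose g i := if f i == f a then f c else f i.
exists g.
  move=> b; case: (eqVneq b (f c)) => [-> | bc].
    have -> : bin g r (f c) = [seq i <- r | (f i == f a) || (f i == f c)].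
      by apply: eq_filter => i; rewrite /g; case: ifP; rewrite ?eqxx.
    apply: fits_filterU; last by move: sum_a sum_rc; rewrite /bin; lra.
    by move: size_a size_c; rewrite /bin /=; lia.
  apply: fits_subseq (fr b); rewrite subseq_filter filter_subseq andbT.
  apply/allP => i; rewrite mem_filter /g => /andP [+ _]; case: ifP => // _ /eqP fcb.
  by rewrite fcb eqxx in bc.
apply: (@subset_ltn_card _ _ _ (f a)); rewrite ?mem_head //.
  move=> _ /mapP [i ir ->]; rewrite /g !inE.
  by case: ifP => _; rewrite ?eqxx ?orbT // map_f ?orbT.
apply/mapP => -[i ir]; rewrite /g; case: ifP => [_ fac | /negbT + fai].
  by rewrite fac eqxx in fca.
by rewrite fai eqxx.
Qed.

Lemma packs_drop_pair (B : finType) (f : T -> B) a c r :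
  packs f [:: a, c & r] -> {in r, forall y, w y <= w a} ->
  exists2 g : T -> B, packs g r & (#|map g r| < #|map f [:: a, c & r]|)%N.
Proof.
move=> fp a_max; case: (eqVneq (f c) (f a)) => [fca | fca].
  by exists f; [apply: packs_cons (packs_cons fp) | apply: packs_drop_shared_bin].
exact: packs_merge_bins.
Qed.

Lemma packs_add_bin (B : finType) (f0 : T -> B) s r b0 :
  {in r, forall i, i \notin s} -> b0 \notin map f0 r -> fits s -> packs f0 r ->
  packs (fun i => if i \in s then b0 else f0 i) (s ++ r).
Proof.
move=> r_s b0_new fs f0r b; rewrite /bin filter_cat.
rewrite (@eq_in_filter _ _ (fun=> b0 == b) s); last by move=> i ->.
rewrite (@eq_in_filter _ _ (fun i => f0 i == b) r); last by move=> i /r_s /negbTE ->.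
case: eqP => [<- | _]; last by rewrite filter_pred0; apply: f0r.
rewrite (@eq_in_filter _ _ pred0 r) ?filter_pred0 ?filter_predT ?cats0 // => i ir.
by apply: contraNF b0_new => /eqP <-; apply: map_f.
Qed.

Definition heavier : rel T := fun i j => w j <= w i.

Lemma heavier_trans : transitive heavier.
Proof. by move=> j i k ji ik; apply: le_trans ik ji. Qed.

Lemma sorted_last_lightest a t :
  sorted heavier (a :: t) -> {in a :: t, forall y, w (last a t) <= w y}.
Proof.
elim: t a => [|z t IH] a /=; first by move=> _ y; rewrite inE => /eqP ->.
case/andP => az zt y; rewrite inE => /predU1P [-> | yt]; last exact: IH.
exact: le_trans (IH z zt z (mem_head _ _)) az.
Qed.

Lemma mm2_loop_le_packs (B : finType) (f : T -> B) t fuel :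
  sorted heavier t -> ((2 * size t).+1 <= fuel)%N -> packs f t ->
  (mm_loop 2 fuel (map w t) 0 0 <= #|map f t|)%N.
Proof.
have [n] := ubnP (size t); elim: n t fuel f => // n IH [|a t] fuel f /=.
  by rewrite mm_loop_nil.
move=> t_n at_sorted fuel_t ft.
have fuel_t3 : ((2 * size t).+3 <= fuel)%N by move: fuel_t; rewrite mulnS.
have t_sorted := path_sorted at_sorted.
have a_max : {in t, forall y, w y <= w a}.
  exact/allP/(order_path_min heavier_trans at_sorted).
have [r [fuel' [fuel_r fb ->]]] := mm2_loop_first_bin fuel_t3 (w_le1 a).
have r_n : (size r < n)%N by apply: leq_ltn_trans (size_subseq (first_bin_subseq fb)) _.
case: fb => [c r_t t_cr _ | r_t single]; last subst r.
  have at_acr : perm_eq (a :: t) [:: a, c & r] by rewrite perm_cons.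
  have r_light := sub_in1 (mem_subseq r_t) a_max.
  have [g gr lt_g] := packs_drop_pair (packs_perm at_acr ft) r_light.
  rewrite (eq_card (perm_mem (perm_map f at_acr))).
  apply: leq_ltn_trans lt_g; apply: IH gr => //.
  exact: (subseq_sorted heavier_trans r_t t_sorted).
have a_single : {in t, forall y, 1 < w a + w y}.
  move=> y yt; case: single => [t0 | a_last]; first by rewrite t0 in yt.
  have yat : y \in a :: t by rewrite inE yt orbT.
  have := sorted_last_lightest at_sorted yat; lra.
have [ft' lt_f] := packs_drop_single ft a_single.
exact: leq_ltn_trans (IH _ _ _ r_n t_sorted fuel_r ft') lt_f.
Qed.

End Packing.

Section MM2Packing.
Variables (R : realFieldType) (T : finType) (w : T -> R).
Hypothesis w_le1 : forall i, w i <= 1.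

Lemma packing_add_bin (f0 : T -> T) a s r :
  uniq (a :: s ++ r) -> fits w (a :: s) -> {in r, forall i, f0 i \in r} -> packs w f0 r ->
  exists f : T -> T, [/\ {in a :: s ++ r, forall i, f i \in a :: s ++ r},
    packs w f (a :: s ++ r) & (#|map f (a :: s ++ r)| <= #|map f0 r|.+1)%N].
Proof.
rewrite -cat_cons cat_uniq => /and3P [_ /hasPn r_new _] fits_as f0_r f0r.
have a_new : a \notin map f0 r.
  by apply/mapP => -[i ir a_f0i]; have := r_new _ (f0_r i ir); rewrite -a_f0i mem_head.
have in_r i : i \in (a :: s) ++ r -> i \notin a :: s -> i \in r.
  by rewrite mem_cat => /orP [-> | ].
exists (fun i => if i \in a :: s then a else f0 i); split.
- move=> i ias_r; case: ifP => [_ | /negbT i_as]; first exact: mem_head.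
  by rewrite mem_cat f0_r ?orbT ?in_r.
- exact: packs_add_bin.
- apply: (@leq_trans #|[predU1 a & map f0 r]|); last by rewrite cardU1 a_new.
  apply/subset_leq_card/subsetP => _ /mapP [i ias_r ->].
  by rewrite !inE; case: ifP => [_ | /negbT i_as]; rewrite ?eqxx // map_f ?orbT ?in_r.
Qed.

Lemma mm2_loop_packing t fuel : uniq t -> ((2 * size t).+1 <= fuel)%N ->
  exists f : T -> T, [/\ {in t, forall i, f i \in t}, packs w f t &
    (#|map f t| <= mm_loop 2 fuel (map w t) 0 0)%N].
Proof.
have [n] := ubnP (size t); elim: n t fuel => // n IH [|a t] fuel /= t_n at_uniq fuel_t.
  by exists id; split=> // [b | ]; [rewrite /fits /bin /= big_nil ler01 | rewrite card0].
have fuel_t3 : ((2 * size t).+3 <= fuel)%N by move: fuel_t; rewrite mulnS.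
have [r [fuel' [fuel_r fb ->]]] := mm2_loop_first_bin fuel_t3 (w_le1 a).
have r_t := first_bin_subseq fb.
have [f0 [f0_r f0r f0_card]] : exists f0 : T -> T, [/\ {in r, forall i, f0 i \in r},
    packs w f0 r & (#|map f0 r| <= mm_loop 2 fuel' (map w r) 0 0)%N].
  apply: IH fuel_r; first exact: leq_ltn_trans (size_subseq r_t) t_n.
  by apply: subseq_uniq r_t _; case/andP: at_uniq.
have [s [t_sr fits_as]] : exists s, perm_eq t (s ++ r) /\ fits w (a :: s).
  case: fb {r_t} => [c _ t_cr ac | <- _]; [exists [:: c] | exists [::]].
    by rewrite /fits big_cons big_seq1.
  by rewrite /fits big_seq1.
have asr_at : perm_eq (a :: s ++ r) (a :: t) by rewrite perm_cons perm_sym.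
have asr_uniq : uniq (a :: s ++ r) by rewrite (perm_uniq asr_at).
have [f [f_in f_packs f_card]] := packing_add_bin asr_uniq fits_as f0_r f0r.
exists f; split.
- by move=> i; rewrite -!(perm_mem asr_at); apply: f_in.
- exact: packs_perm asr_at f_packs.
- by rewrite -(eq_card (perm_mem (perm_map f asr_at))); apply: leq_trans f_card _.
Qed.

End MM2Packing.

Section Indices.
Variables (R : realFieldType) (I : seq R).

Definition item (i : 'I_(size I)) : R := I`_i.

Definition sorted_indices : seq 'I_(size I) := sort (heavier item) (enum 'I_(size I)).

Lemma sorted_indices_sorted : sorted (heavier item) sorted_indices.
Proof. by apply: sort_sorted => i j; apply: le_total. Qed.

Lemma sorted_indices_uniq : uniq sorted_indices.
Proof. by rewrite sort_uniq enum_uniq. Qed.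

Lemma size_sorted_indices : size sorted_indices = size I.
Proof. by rewrite size_sort size_enum_ord. Qed.

Lemma perm_sorted_indices : perm_eq sorted_indices (index_enum 'I_(size I)).
Proof.
apply: uniq_perm; rewrite ?sorted_indices_uniq ?index_enum_uniq // => i.
by rewrite mem_sort mem_enum mem_index_enum.
Qed.

Lemma MM_sorted_indices :
  MM 2 I = mm_loop 2 (2 * size I).+2 (map item sorted_indices) 0 0.
Proof.
have enum_I : map item (enum 'I_(size I)) = I.
  by rewrite -[RHS](mkseq_nth 0) /mkseq -val_enum_ord -map_comp.
by rewrite /MM -[in LHS]enum_I sort_map size_map size_enum_ord.
Qed.

Lemma feasible_packs g : feasible 2 I g <-> packs item g sorted_indices.
Proof.
have size_bin b : #|[set i | g i == b]| = size (bin g sorted_indices b).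
  rewrite size_filter -sum1_count (perm_big _ perm_sorted_indices) -sum1_card.
  by apply: eq_bigl => i; rewrite inE.
have sum_bin b : \sum_(i | g i == b) I`_i = \sum_(i <- bin g sorted_indices b) item i.
  by rewrite big_filter (perm_big _ perm_sorted_indices).
split=> [/forallP g_feas b | g_packs].
  by have /andP [] := g_feas b; rewrite size_bin sum_bin.
by apply/forallP => b; have [] := g_packs b; rewrite size_bin sum_bin => -> ->.
Qed.

Lemma OPT_le_nbins k g : feasible k I g -> (OPT k I <= nbins g)%N.
Proof. by move=> g_feas; rewrite /OPT -minEnat -leEnat; apply: bigmin_le_cond. Qed.

Lemma le_OPT k m : (m <= size I)%N ->
  (forall g, feasible k I g -> (m <= nbins g)%N) -> (m <= OPT k I)%N.
Proof. by move=> m_n m_feas; rewrite /OPT -minEnat -leEnat; apply: le_bigmin. Qed.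

Lemma nbins_sorted_indices g : nbins g = #|map g sorted_indices|.
Proof.
apply: eq_card => b; apply/imsetP/mapP => -[i _ ->]; exists i => //.
by rewrite mem_sort mem_enum.
Qed.

End Indices.
Arguments item {R} I i.

Theorem theorem7 (R : realFieldType) (I : seq R)
  (hI : all (fun a => (0 < a) && (a <= 1)) I) :
  MM 2 I = OPT 2 I.
Proof.
have item_ge0 i : 0 <= item I i by case/andP: (all_nthP 0 hI i (ltn_ord i)) => /ltW.
have item_le1 i : item I i <= 1 by case/andP: (all_nthP 0 hI i (ltn_ord i)).
have fuel : ((2 * size (sorted_indices I)).+1 <= (2 * size I).+2)%N.
  by rewrite size_sorted_indices.
have MM_le_packs (B : finType) (f : 'I_(size I) -> B) :
    packs (item I) f (sorted_indices I) -> (MM 2 I <= #|map f (sorted_indices I)|)%N.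
  rewrite MM_sorted_indices; apply: mm2_loop_le_packs => //.
  exact: sorted_indices_sorted.
apply/eqP; rewrite eqn_leq; apply/andP; split.
  apply: le_OPT => [|g /feasible_packs /MM_le_packs]; last by rewrite nbins_sorted_indices.
  apply: leq_trans (MM_le_packs _ _ (packs_singletons item_le1 (sorted_indices_uniq I))) _.
  by apply: leq_trans (card_size _) _; rewrite size_map size_sorted_indices.
have [f [_ f_packs f_card]] := mm2_loop_packing item_le1 (sorted_indices_uniq I) fuel.
have g_feas : feasible 2 I [ffun i => f i].
  apply/feasible_packs => b; rewrite /bin.
  by under eq_filter do rewrite ffunE; apply: f_packs.
apply: leq_trans (OPT_le_nbins g_feas) _.
rewrite nbins_sorted_indices MM_sorted_indices.
by under eq_map do rewrite ffunE.
Qed.
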